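(* Consider the $L$-layer LSTM described in the context, with $L\in\mathbb{N}$, and let $k\in\mathbb{Z}_{\ge 0}$. For every $l\in[L]$, the set $\mathcal{S}^{(l)}(k)=\mathcal{C}^{(l)}(k)\times\mathcal{H}^{(l)}(k)$ is invariant: for every input sequence $x(t)\in[-x_{\max},x_{\max}]^{n_x}$, $t\ge 0$, if $s^{(l)}(0)=(c^{(l)}(0),h^{(l)}(0))\in\mathcal{S}^{(l)}(k)$, then $s^{(l)}(t)=(c^{(l)}(t),h^{(l)}(t))\in\mathcal{S}^{(l)}(k)$ for all $t\in\mathbb{Z}_{\ge 0}$. Moreover, $\mathcal{S}^{(l)}(k+1)\subseteq\mathcal{S}^{(l)}(k)$ for all $k\in\mathbb{Z}_{\ge 0}$.
   Context: LSTM: fix $L\in\mathbb{N}$, dimensions $n_x,n_c$, and $x_{\max}>0$. For $l\in[L]$ let $n^{(l)}=n_x$ if $l=1$, $n^{(l)}=n_c$ if $l\ge2$; weights $W^{(l)}_*\in\mathbb{R}^{n_c\times n^{(l)}}$, $U^{(l)}_*\in\mathbb{R}^{n_c\times n_c}$, biases $b^{(l)}_*\in\mathbb{R}^{n_c}$, $*\in\{f,i,c,o\}$. With $\sigma(w)=1/(1+e^{-w})$, $\phi=\tanh$ (componentwise) and $\odot$ the componentwise product, for $t\in\mathbb{Z}_{\ge0}$: $c^{(l)}(t+1)=\sigma(W^{(l)}_f x^{(l)}(t)+U^{(l)}_f h^{(l)}(t)+b^{(l)}_f)\odot c^{(l)}(t)+\sigma(W^{(l)}_i x^{(l)}(t)+U^{(l)}_i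 h^{(l)}(t)+b^{(l)}_i)\odot\phi(W^{(l)}_c x^{(l)}(t)+U^{(l)}_c h^{(l)}(t)+b^{(l)}_c)$, $h^{(l)}(t+1)=\sigma(W^{(l)}_o x^{(l)}(t)+U^{(l)}_o h^{(l)}(t)+b^{(l)}_o)\odot\phi(c^{(l)}(t+1))$, where $x^{(1)}(t)=x(t)\in[-x_{\max},x_{\max}]^{n_x}$ and $x^{(l)}(t)=h^{(l-1)}(t+1)$ for $l\ge2$; $c^{(l)}\in\mathbb{R}^{n_c}$, $h^{(l)}\in(-1,1)^{n_c}$, and $s^{(l)}(t)=(c^{(l)}(t),h^{(l)}(t))$. Invariant-set quantities: let $x^{(l)}_{\max}=x_{\max}$ if $l=1$ and $=1$ if $l\ge2$. For a matrix $A$, $|A|$ is the entrywise absolute value; $\mathbf{1}_n$ the all-ones vector; $v_+=(\max\{v_{(j)},0\})_j$; $\|v\|_\infty=\max_j|v_{(j)}|$. For $\eta\ge0$ and $*\in\{f,i,o\}$: $G^{(l)}_*(\eta)=\|(x^{(l)}_{\max}|W^{(l)}_*|\mathbf{1}_{n^{(l)}}+\eta|U^{(l)}_*|\mathbf{1}_{n_c}+b^{(l)}_* )_+\|_\infty$, $G^{(l)}_c(\eta)=\|x^{(l)}_{\max}|W^{(l)}_c|\mathbf{1}_{n^{(l)}}+\eta|U^{(l)}_c|\mathbf{1}_{n_c}+|b^{(l)}_c|\|_\infty$. With $\eta^{(l)}(-1)=1$ and for $k\ge0$: $\overline{\sigma}^{(l)}_*(k)=\sigma(G^{(l)}_*(\eta^{(l)}(k-1)))$,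 $\overline{\phi}^{(l)}_c(k)=\phi(G^{(l)}_c(\eta^{(l)}(k-1)))$, $\overline{c}^{(l)}(k)=\overline{\sigma}^{(l)}_i(k)\overline{\phi}^{(l)}_c(k)/(1-\overline{\sigma}^{(l)}_f(k))$, $\eta^{(l)}(k)=\phi(\overline{c}^{(l)}(k))\overline{\sigma}^{(l)}_o(k)$. Finally $\mathcal{C}^{(l)}(k)=\{c\in\mathbb{R}^{n_c}:\|c\|_\infty\le\overline{c}^{(l)}(k)\}$ and $\mathcal{H}^{(l)}(k)=\{h\in\mathbb{R}^{n_c}:\|h\|_\infty\le\phi(\overline{c}^{(l)}(k))\overline{\sigma}^{(l)}_o(k)\}$. *)

From HB Require Import structures.
From mathcomp Require Import all_boot all_order all_algebra.
From mathcomp Require Import all_classical all_reals all_analysis.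
Set Implicit Arguments. Unset Strict Implicit. Unset Printing Implicit Defensive.
Import Order.TTheory GRing.Theory Num.Theory.
Local Open Scope ring_scope.

Section LSTM.
Variable R : realType.

Definition sigmoid (w : R) : R := 1 / (1 + expR (- w)).
Definition tanhR (w : R) : R := (expR w - expR (- w)) / (expR w + expR (- w)).

Inductive gate := gf | gi | gc | go.

Record lstm_layer (nin nc : nat) := LstmLayer {
  W : gate -> 'M[R]_(nc, nin);
  U : gate -> 'M[R]_(nc, nc);
  b : gate -> 'cV[R]_nc }.

Variables (nin nc : nat) (P : lstm_layer nin nc).

Definition preact (g : gate) (x : 'cV[R]_nin) (h : 'cV[R]_nc) : 'cV[R]_nc :=
  W P g *m x + U P g *m h + b P g.

Definition cell_c (x : 'cV[R]_nin) (c h : 'cV[R]_nc) : 'cV[R]_nc :=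
  \col_j (sigmoid (preact gf x h j 0) * c j 0
          + sigmoid (preact gi x h j 0) * tanhR (preact gc x h j 0)).

Definition cell_h (x : 'cV[R]_nin) (c h : 'cV[R]_nc) : 'cV[R]_nc :=
  \col_j (sigmoid (preact go x h j 0) * tanhR (cell_c x c h j 0)).

(** invariant-set quantities, xm = x^{(l)}_max *)
Definition rowabs_W (g : gate) (j : 'I_nc) : R := \sum_(m < nin) `|W P g j m|.
Definition rowabs_U (g : gate) (j : 'I_nc) : R := \sum_(m < nc) `|U P g j m|.

Definition Gpos (xm : R) (g : gate) (eta : R) : R :=
  \big[Num.max/0]_(j < nc)
     Num.max (xm * rowabs_W g j + eta * rowabs_U g j + b P g j 0) 0.

Definition Gc (xm eta : R) : R :=
  \big[Num.max/0]_(j < nc)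
     `|xm * rowabs_W gc j + eta * rowabs_U gc j + `|b P gc j 0| |.

(* cbar as a function of the previous eta *)
Definition cbar_of (xm eta : R) : R :=
  sigmoid (Gpos xm gi eta) * tanhR (Gc xm eta) / (1 - sigmoid (Gpos xm gf eta)).

Definition hbar_of (xm eta : R) : R :=
  tanhR (cbar_of xm eta) * sigmoid (Gpos xm go eta).

(* eta_prev xm k = eta^{(l)}(k-1); eta^{(l)}(-1) = 1 *)
Fixpoint eta_prev (xm : R) (k : nat) : R :=
  match k with
  | 0%N => 1
  | k'.+1 => hbar_of xm (eta_prev xm k')
  end.

Definition cbar (xm : R) (k : nat) : R := cbar_of xm (eta_prev xm k).
Definition eta (xm : R) (k : nat) : R := hbar_of xm (eta_prev xm k).

Definition in_S (xm : R) (k : nat) (c h : 'cV[R]_nc) : Prop :=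
  (forall j, `|c j 0| <= cbar xm k) /\ (forall j, `|h j 0| <= eta xm k).

End LSTM.

(** The L-layer network: layer 1 has parameters P1 (input dim n_x),
    layers l >= 2 have parameters Pd l (input dim n_c). *)

Definition S_layer (R : realType) (n_x n_c : nat) (xmax : R)
  (P1 : lstm_layer R n_x n_c) (Pd : nat -> lstm_layer R n_c n_c)
  (l k : nat) (c h : 'cV[R]_n_c) : Prop :=
  if l == 1%N then in_S P1 xmax k c h else in_S (Pd l) 1 k c h.

Definition is_lstm_traj (R : realType) (L n_x n_c : nat)
  (P1 : lstm_layer R n_x n_c) (Pd : nat -> lstm_layer R n_c n_c)
  (x : nat -> 'cV[R]_n_x) (c h : nat -> nat -> 'cV[R]_n_c) : Prop :=
  (forall l j, (1 <= l <= L)%N -> `|h l 0%N j 0| < 1) /\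
  (forall t, c 1%N t.+1 = cell_c P1 (x t) (c 1%N t) (h 1%N t) /\
             h 1%N t.+1 = cell_h P1 (x t) (c 1%N t) (h 1%N t)) /\
  (forall l t, (2 <= l <= L)%N ->
     c l t.+1 = cell_c (Pd l) (h l.-1 t.+1) (c l t) (h l t) /\
     h l t.+1 = cell_h (Pd l) (h l.-1 t.+1) (c l t) (h l t)).

(* If |h| <= eta(k) <= eta(k-1), the row sums of |W| and |U|
   bound every gate pre-activation by G(eta(k-1)); as sigmoid and tanh are
   increasing, one step then maps |c| <= cbar(k) to
   |c'| <= sigma_f cbar(k) + sigma_i phi_c, which is cbar(k) again because
   cbar(k) is the fixed point of this affine map, and |h'| <= eta(k) follows
   likewise.  All these bounds are nondecreasing in eta, so eta(0) <= 1 =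
   eta(-1) propagates by induction to eta(k+1) <= eta(k): this is the fact
   used above and it gives S(k+1) in S(k).  For layers l >= 2 the input
   h^(l-1) lies in (-1,1), whence x_max = 1 there. *)

From HB Require Import structures.
From mathcomp Require Import all_boot all_order all_algebra.
From mathcomp Require Import all_classical all_reals all_analysis.
From mathcomp Require Import lra ring.
Set Implicit Arguments. Unset Strict Implicit. Unset Printing Implicit Defensive.
Import Order.TTheory GRing.Theory Num.Theory.
Local Open Scope ring_scope.

Lemma normr_mulmx_col_le (R : numDomainType) p n (M : 'M[R]_(p, n))
    (v : 'cV[R]_n) (a : R) (i : 'I_p) :
  (forall m, `|v m 0| <= a) -> `|(M *m v) i 0| <= a * \sum_(m < n) `|M i m|.
Proof.
move=> v_le; rewrite mxE mulr_sumr; apply: le_trans (ler_norm_sum _ _ _) _.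
by apply: ler_sum => m _; rewrite normrM mulrC ler_wpM2r.
Qed.

Section Activations.
Variable R : realType.
Implicit Types a w : R.

Lemma sigmoid_gt0 w : 0 < sigmoid w.
Proof. by rewrite /sigmoid divr_gt0 // addr_gt0 ?expR_gt0. Qed.

Lemma sigmoid_ge0 w : 0 <= sigmoid w.
Proof. exact/ltW/sigmoid_gt0. Qed.

Lemma sigmoid_lt1 w : sigmoid w < 1.
Proof. by rewrite /sigmoid ltr_pdivrMr ?addr_gt0 ?expR_gt0 // mul1r ltrDl expR_gt0. Qed.

Lemma ler_sigmoid : {mono @sigmoid R : a w / a <= w}.
Proof.
move=> a w; rewrite /sigmoid !mul1r lef_pV2 ?posrE ?addr_gt0 ?expR_gt0 //.
by rewrite lerD2l ler_expR lerN2.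
Qed.

Lemma normr_sigmoidM w a : `|sigmoid w * a| = sigmoid w * `|a|.
Proof. by rewrite normrM gtr0_norm ?sigmoid_gt0. Qed.

Lemma tanhRE w : tanhR w = 1 - 2 / (expR w ^+ 2 + 1).
Proof.
rewrite /tanhR expRN; have u_gt0 := expR_gt0 w; set u := expR w in u_gt0 *.
have d_neq0 : u ^+ 2 + 1 != 0 by rewrite gt_eqF // addr_gt0 // exprn_gt0.
by field; rewrite d_neq0 gt_eqF.
Qed.

Lemma ler_tanhR : {mono @tanhR R : a w / a <= w}.
Proof.
move=> a w; rewrite !tanhRE lerD2l lerN2 ler_pM2l //.
rewrite lef_pV2 ?posrE ?addr_gt0 ?exprn_gt0 ?expR_gt0 // lerD2r.
by rewrite ler_pXn2r ?nnegrE ?expR_ge0 // ler_expR.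
Qed.

Lemma tanhR0 : tanhR (0 : R) = 0.
Proof. by rewrite /tanhR oppr0 subrr mul0r. Qed.

Lemma tanhRN w : tanhR (- w) = - tanhR w.
Proof. by rewrite /tanhR opprK -mulNr opprB [expR w + _]addrC. Qed.

Lemma tanhR_ge0 w : 0 <= w -> 0 <= tanhR w.
Proof. by move=> w_ge0; rewrite -tanhR0 ler_tanhR. Qed.

Lemma normr_tanhR w : `|tanhR w| = tanhR `|w|.
Proof.
have [w_ge0|w_lt0] := lerP 0 w; first by rewrite !ger0_norm ?tanhR_ge0.
rewrite (ltr0_norm w_lt0) tanhRN ler0_norm //.
by rewrite -tanhR0 ler_tanhR ltW.
Qed.

Lemma normr_tanhR_lt1 w : `|tanhR w| < 1.
Proof.
rewrite tanhRE; have e_gt0 : 0 < expR w ^+ 2 by rewrite exprn_gt0 ?expR_gt0.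
have q_gt0 : 0 < 2 / (expR w ^+ 2 + 1) by rewrite divr_gt0 // addr_gt0.
have q_lt2 : 2 / (expR w ^+ 2 + 1) < 2.
  by rewrite ltr_pdivrMr ?addr_gt0 // mulrDr mulr1 ltrDr mulr_gt0.
rewrite ltr_norml; apply/andP; split; lra.
Qed.

End Activations.

Section Layer.
Variables (R : realType) (nin nc : nat) (P : lstm_layer R nin nc).
Implicit Types (x : 'cV[R]_nin) (c h : 'cV[R]_nc) (xm e : R) (j : 'I_nc) (g : gate).

Lemma rowabs_W_ge0 g j : 0 <= rowabs_W P g j.
Proof. exact: sumr_ge0. Qed.

Lemma rowabs_U_ge0 g j : 0 <= rowabs_U P g j.
Proof. exact: sumr_ge0. Qed.

Lemma preact_le g x h xm e j :
  (forall m, `|x m 0| <= xm) -> (forall m, `|h m 0| <= e) ->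
  preact P g x h j 0 <= xm * rowabs_W P g j + e * rowabs_U P g j + b P g j 0.
Proof.
move=> x_le h_le; rewrite /preact 2!mxE lerD2r.
by apply: lerD; apply: le_trans (ler_norm _) _; apply: normr_mulmx_col_le.
Qed.

Lemma normr_preact_le g x h xm e j :
  (forall m, `|x m 0| <= xm) -> (forall m, `|h m 0| <= e) ->
  `|preact P g x h j 0| <= xm * rowabs_W P g j + e * rowabs_U P g j + `|b P g j 0|.
Proof.
move=> x_le h_le; rewrite /preact 2!mxE; apply: le_trans (ler_normD _ _) _.
rewrite lerD2r; apply: le_trans (ler_normD _ _) _.
by apply: lerD; apply: normr_mulmx_col_le.
Qed.

Lemma Gpos_ge0 xm g e : 0 <= Gpos P xm g e.
Proof.
apply: (big_ind (fun z => 0 <= z)) => // [z y z_ge0 _|i _].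
  by rewrite le_max z_ge0.
by rewrite le_max lexx orbT.
Qed.

Lemma Gc_ge0 xm e : 0 <= Gc P xm e.
Proof. by apply: (big_ind (fun z => 0 <= z)) => // z y z_ge0 _; rewrite le_max z_ge0. Qed.

Lemma le_Gpos xm g e j :
  xm * rowabs_W P g j + e * rowabs_U P g j + b P g j 0 <= Gpos P xm g e.
Proof. by apply: le_trans (le_bigmax _ _ j); rewrite le_max lexx. Qed.

Lemma le_Gc xm e j :
  `|xm * rowabs_W P gc j + e * rowabs_U P gc j + `|b P gc j 0| | <= Gc P xm e.
Proof. exact: (le_bigmax _ _ j). Qed.

Lemma Gpos_homo xm g : {homo Gpos P xm g : e1 e2 / e1 <= e2}.
Proof.
move=> e1 e2 le_e; apply: bigmax_le => [|i _]; first exact: Gpos_ge0.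
rewrite ge_max Gpos_ge0 andbT; apply: le_trans (le_Gpos xm g e2 i).
by rewrite lerD2r lerD2l ler_wpM2r ?rowabs_U_ge0.
Qed.

Lemma Gc_homo xm e1 e2 : 0 <= xm -> 0 <= e1 -> e1 <= e2 -> Gc P xm e1 <= Gc P xm e2.
Proof.
move=> xm_ge0 e1_ge0 le_e; apply: bigmax_le => [|i _]; first exact: Gc_ge0.
apply: le_trans (le_Gc xm e2 i).
have arg_ge0 e : 0 <= e -> 0 <= xm * rowabs_W P gc i + e * rowabs_U P gc i + `|b P gc i 0|.
  by move=> e_ge0; rewrite !addr_ge0 ?mulr_ge0 ?rowabs_W_ge0 ?rowabs_U_ge0.
rewrite (ger0_norm (arg_ge0 _ e1_ge0)) (ger0_norm (arg_ge0 _ (le_trans e1_ge0 le_e))).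
by rewrite lerD2r lerD2l ler_wpM2r ?rowabs_U_ge0.
Qed.

Lemma cbar_of_ge0 xm e : 0 <= cbar_of P xm e.
Proof.
have sigma_f_lt1 := sigmoid_lt1 (Gpos P xm gf e).
apply: divr_ge0; last by rewrite subr_ge0 ltW.
by rewrite mulr_ge0 ?sigmoid_ge0 ?tanhR_ge0 ?Gc_ge0.
Qed.

Lemma hbar_of_ge0 xm e : 0 <= hbar_of P xm e.
Proof. by rewrite mulr_ge0 ?sigmoid_ge0 ?tanhR_ge0 ?cbar_of_ge0. Qed.

Lemma hbar_of_le1 xm e : hbar_of P xm e <= 1.
Proof.
rewrite mulr_ile1 ?sigmoid_ge0 ?tanhR_ge0 ?cbar_of_ge0 ?ltW ?sigmoid_lt1 //.
exact: le_lt_trans (ler_norm _) (normr_tanhR_lt1 _).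
Qed.

Lemma cbar_of_homo xm e1 e2 : 0 <= xm -> 0 <= e1 -> e1 <= e2 ->
  cbar_of P xm e1 <= cbar_of P xm e2.
Proof.
move=> xm_ge0 e1_ge0 le_e.
have le_f := Gpos_homo xm gf le_e; have le_i := Gpos_homo xm gi le_e.
have le_c := Gc_homo xm_ge0 e1_ge0 le_e.
rewrite /cbar_of; apply: ler_pM.
- by rewrite mulr_ge0 ?sigmoid_ge0 ?tanhR_ge0 ?Gc_ge0.
- by rewrite invr_ge0 subr_ge0 ltW ?sigmoid_lt1.
- by apply: ler_pM; rewrite ?sigmoid_ge0 ?tanhR_ge0 ?Gc_ge0 ?ler_sigmoid ?ler_tanhR.
- by rewrite lef_pV2 ?posrE ?subr_gt0 ?sigmoid_lt1 // lerD2l lerN2 ler_sigmoid.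
Qed.

Lemma hbar_of_homo xm e1 e2 : 0 <= xm -> 0 <= e1 -> e1 <= e2 ->
  hbar_of P xm e1 <= hbar_of P xm e2.
Proof.
move=> xm_ge0 e1_ge0 le_e; apply: ler_pM.
- by rewrite tanhR_ge0 ?cbar_of_ge0.
- exact: sigmoid_ge0.
- by rewrite ler_tanhR cbar_of_homo.
- by rewrite ler_sigmoid Gpos_homo.
Qed.

Lemma eta_prev_ge0 xm k : 0 <= eta_prev P xm k.
Proof. by case: k => [|k] //=; apply: hbar_of_ge0. Qed.

Lemma eta_prev_nonincreasing xm k : 0 <= xm -> eta_prev P xm k.+1 <= eta_prev P xm k.
Proof.
move=> xm_ge0; elim: k => [|k IHk]; first exact: hbar_of_le1.
exact: hbar_of_homo (eta_prev_ge0 _ _) IHk.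
Qed.

Lemma cbar_of_fixpoint xm e :
  cbar_of P xm e = sigmoid (Gpos P xm gf e) * cbar_of P xm e
                   + sigmoid (Gpos P xm gi e) * tanhR (Gc P xm e).
Proof.
have f_lt1 := sigmoid_lt1 (Gpos P xm gf e).
rewrite /cbar_of; set f := sigmoid _ in f_lt1 *.
by field; rewrite subr_eq0 eq_sym lt_eqF.
Qed.

Lemma normr_cell_h_lt1 x c h j : `|cell_h P x c h j 0| < 1.
Proof.
rewrite mxE normr_sigmoidM; apply: le_lt_trans (normr_tanhR_lt1 (cell_c P x c h j 0)).
by rewrite ler_piMl // ltW ?sigmoid_lt1.
Qed.

Lemma in_S_cell xm k x c h : 0 <= xm -> (forall m, `|x m 0| <= xm) ->
  in_S P xm k c h -> in_S P xm k (cell_c P x c h) (cell_h P x c h).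
Proof.
move=> xm_ge0 x_le [c_le h_le]; set e := eta_prev P xm k.
have h_le_e m : `|h m 0| <= e := le_trans (h_le m) (eta_prev_nonincreasing k xm_ge0).
have gate_le g j : sigmoid (preact P g x h j 0) <= sigmoid (Gpos P xm g e).
  by rewrite ler_sigmoid; apply: le_trans (le_Gpos xm g e j); apply: preact_le.
have c'_le j : `|cell_c P x c h j 0| <= cbar P xm k.
  rewrite mxE /cbar -/e [leRHS]cbar_of_fixpoint.
  apply: le_trans (ler_normD _ _) _; rewrite !normr_sigmoidM.
  apply: lerD; apply: ler_pM; rewrite ?sigmoid_ge0 ?normr_ge0 ?gate_le ?c_le //.
  rewrite normr_tanhR ler_tanhR.
  apply: le_trans (le_trans (ler_norm _) (le_Gc xm e j)); exact: normr_preact_le.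
split=> // j; rewrite mxE normr_sigmoidM /eta /hbar_of -/e mulrC.
by rewrite ler_pM ?sigmoid_ge0 ?gate_le // normr_tanhR ler_tanhR c'_le.
Qed.

Lemma in_S_trajectory xm k (x : nat -> 'cV[R]_nin) (c h : nat -> 'cV[R]_nc) :
  0 <= xm -> (forall t m, `|x t m 0| <= xm) ->
  (forall t, c t.+1 = cell_c P (x t) (c t) (h t) /\
             h t.+1 = cell_h P (x t) (c t) (h t)) ->
  in_S P xm k (c 0%N) (h 0%N) -> forall t, in_S P xm k (c t) (h t).
Proof.
move=> xm_ge0 x_le step S0; elim=> [|t IHt] //.
by case: (step t) => -> ->; apply: in_S_cell.
Qed.

Lemma in_S_succ xm k c h : 0 <= xm -> in_S P xm k.+1 c h -> in_S P xm k c h.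
Proof.
move=> xm_ge0 [c_le h_le].
have e_le := eta_prev_nonincreasing k xm_ge0.
have e_ge0 := eta_prev_ge0 xm k.+1.
split=> j; [apply: le_trans (c_le j) _ | apply: le_trans (h_le j) _].
  exact: cbar_of_homo e_ge0 e_le.
exact: hbar_of_homo e_ge0 e_le.
Qed.

End Layer.

Lemma lstm_traj_hidden_lt1 (R : realType) (L n_x n_c : nat)
    (P1 : lstm_layer R n_x n_c) (Pd : nat -> lstm_layer R n_c n_c)
    (x : nat -> 'cV[R]_n_x) (c h : nat -> nat -> 'cV[R]_n_c) l t m :
  is_lstm_traj L P1 Pd x c h -> (1 <= l <= L)%N -> `|h l t.+1 m 0| < 1.
Proof.
move=> [_ [step1 stepd]] /andP[l_ge1 l_leL].
have [->|l_neq1] := eqVneq l 1%N; first by rewrite (step1 t).2 normr_cell_h_lt1.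
have l_ge2 : (2 <= l)%N by rewrite ltn_neqAle eq_sym l_neq1 l_ge1.
by rewrite (stepd l t _).2 ?l_ge2 // normr_cell_h_lt1.
Qed.

Theorem proposition4p1 (R : realType) (L n_x n_c : nat) (xmax : R)
  (P1 : lstm_layer R n_x n_c) (Pd : nat -> lstm_layer R n_c n_c)
  (k l : nat) :
  0 < xmax -> (1 <= l <= L)%N ->
  (forall (x : nat -> 'cV[R]_n_x) (c h : nat -> nat -> 'cV[R]_n_c),
     (forall t j, `|x t j 0| <= xmax) ->
     is_lstm_traj L P1 Pd x c h ->
     S_layer xmax P1 Pd l k (c l 0%N) (h l 0%N) ->
     forall t, S_layer xmax P1 Pd l k (c l t) (h l t)) /\
  (forall k' (c0 h0 : 'cV[R]_n_c),
     S_layer xmax P1 Pd l k'.+1 c0 h0 -> S_layer xmax P1 Pd l k' c0 h0).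
Proof.
move=> /ltW xmax_ge0 /andP[l_ge1 l_leL]; rewrite /S_layer.
split=> [x c h x_le traj|k' c0 h0]; last by case: ifP => _; apply: in_S_succ.
have [-> /= S0|l_neq1] := eqVneq l 1%N; first exact: in_S_trajectory x_le traj.2.1 S0.
move=> /= S0.
have l_ge2 : (2 <= l)%N by rewrite ltn_neqAle eq_sym l_neq1 l_ge1.
have l'_range : (1 <= l.-1 <= L)%N.
  by rewrite -ltnS prednK ?(leq_trans _ l_ge2) // (leq_trans (leq_pred l)).
apply: (in_S_trajectory (x := fun t => h l.-1 t.+1)) S0 => // [t m|t].
  exact/ltW/(lstm_traj_hidden_lt1 t m traj).
by apply: traj.2.2; rewrite l_ge2.
Qed.
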